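(* Fix integers $k \ge 2$ and $1 \le t \le k$. Let $X$ be a set of $n$ elements carrying a fixed but unknown total order, and suppose we have a $(k,t)$ scale, which on input any $k$-element subset of $X$ returns the $t$-th smallest element of that subset. Let $S$ be the set of the $t-1$ smallest elements of $X$ and $L$ the set of the $k-t$ largest elements of $X$. Then there is an adaptive (on-line) procedure, using $O(n \log n)$ queries (for fixed $k$ and $t$, as $n \to \infty$), which identifies the set $S \cup L$ and determines the relative order of all elements of $X \setminus (S \cup L)$; if the scale is symmetric, i.e. $t = (k+1)/2$, the order is determined up to reversal.
   Context: A query consists of submitting a $k$-element subset of $X$ to the scale and receiving its output. In the on-line setting each query may be chosen depending on the results of previous queries. The ordering of the elements of $S$ and of $L$ can never be determined, since these elements are never returned by any query. *)

From mathcomp Require Import all_boot all_order all_fingroup.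
Set Implicit Arguments. Unset Strict Implicit. Unset Printing Implicit Defensive.

(* The ground set X is 'I_n.  The unknown total order is encoded by a
   permutation p : {perm 'I_n}; p x is the (0-based) rank of x, so
   x is smaller than y iff p x < p y. *)

Definition scale (t n : nat) (p : {perm 'I_n}) (A : {set 'I_n}) : option 'I_n :=
  [pick x in A | #|[set y in A | p y < p x]| == t.-1].

(* Adaptive (on-line) query procedures = decision trees.  A leaf outputs
   a candidate for S ∪ L together with a sequence listing the remaining
   elements in (claimed) increasing order. *)
Inductive qtree (n : nat) : Type :=
| QLeaf of {set 'I_n} * seq 'I_n
| QAsk of {set 'I_n} & ('I_n -> qtree n).

Fixpoint run (k t n : nat) (p : {perm 'I_n}) (T : qtree n)
  : option (nat * ({set 'I_n} * seq 'I_n)) :=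
  match T with
  | QLeaf o => Some (0, o)
  | QAsk A f =>
      if #|A| == k then
        match scale t p A with
        | Some x => omap (fun r => (r.1.+1, r.2)) (run k t p (f x))
        | None => None
        end
      else None
  end.

Definition smallS (t n : nat) (p : {perm 'I_n}) : {set 'I_n} :=
  [set x | p x < t.-1].
Definition largeL (k t n : nat) (p : {perm 'I_n}) : {set 'I_n} :=
  [set x | n - (k - t) <= p x].

Definition mid_sorted (k t n : nat) (p : {perm 'I_n}) : seq 'I_n :=
  sort (fun x y => p x <= p y) (enum (~: (smallS t p :|: largeL k t p))).

From mathcomp Require Import all_boot all_order all_fingroup zify.
Set Implicit Arguments. Unset Strict Implicit. Unset Printing Implicit Defensive.

(* The answer of a (k,t) scale has t-1 smaller and k-t larger elements in the
   query, so it never lies in E = S ∪ L.  Hence, starting from k-1 elements and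
   adding the others one at a time, each time discarding the answer, leaves
   exactly E after fewer than n queries.  Once E is known, for e ∈ E and
   x, y ∉ E the query (E \ e) ∪ {x, y} returns the smaller of x, y if e ∈ L and
   the larger if e ∈ S.  Probing every e ∈ E with one fixed pair splits E into
   S and L, which are told apart by their sizes t-1 and k-t unless k+1 = 2t.
   A fixed e ∈ E then is a comparison oracle on X \ E, and merge sort finishes
   with O(n log n) queries. *)

(* Decision trees with arbitrary results, so that procedures compose by [bind]. *)
Inductive prog (n : nat) (A : Type) : Type :=
| Ret of A
| Ask of {set 'I_n} & ('I_n -> prog n A).
Arguments Ret {n A}. Arguments Ask {n A}.

Fixpoint bind n A B (P : prog n A) (f : A -> prog n B) : prog n B :=
  match P with Ret a => f a | Ask Q g => Ask Q (fun x => bind (g x) f) end.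

Fixpoint foldm n S T (f : S -> T -> prog n S) (l : seq T) (s : S) : prog n S :=
  if l is x :: l' then bind (f s x) (foldm f l') else Ret s.

Fixpoint qtree_of n (P : prog n ({set 'I_n} * seq 'I_n)) : qtree n :=
  match P with Ret o => QLeaf o | Ask Q g => QAsk Q (fun x => qtree_of (g x)) end.

Section Evaluation.
Variables (k t n : nat) (p : {perm 'I_n}).

Fixpoint eval A (P : prog n A) : option (nat * A) :=
  match P with
  | Ret a => Some (0, a)
  | Ask Q g =>
      if #|Q| == k then
        if scale t p Q is Some x then omap (fun r => (r.1.+1, r.2)) (eval (g x))
        else None
      else None
  end.

Lemma run_qtree_of P : run k t p (qtree_of P) = eval P.
Proof.
elim: P => //= Q g IH; case: (#|Q| == k) => //; case: (scale t p Q) => // x.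
by rewrite IH.
Qed.

Definition spec A (P : prog n A) (c : nat) (R : A -> Prop) :=
  exists c' a, eval P = Some (c', a) /\ c' <= c /\ R a.

Lemma spec_ret A (a : A) c (R : A -> Prop) : R a -> spec (Ret a) c R.
Proof. by move=> Ra; exists 0, a. Qed.

Lemma spec_weaken A (P : prog n A) c1 c2 (R1 R2 : A -> Prop) :
  spec P c1 R1 -> c1 <= c2 -> (forall a, R1 a -> R2 a) -> spec P c2 R2.
Proof.
move=> [c' [a [Pa [le_c' Ra]]]] le12 R12; exists c', a.
by split=> //; split; [exact: leq_trans le_c' le12 | exact: R12].
Qed.

Lemma spec_bind A B (P : prog n A) (f : A -> prog n B) c1 c2 R1 R2 :
  spec P c1 R1 -> (forall a, R1 a -> spec (f a) c2 R2) ->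
  spec (bind P f) (c1 + c2) R2.
Proof.
elim: P c1 => [a|Q g IH] c1 /=.
  move=> [c' [a' [[<- <-] [_ Ra]]]] spec_f.
  by apply: spec_weaken (spec_f _ Ra) _ _ => //; rewrite leq_addl.
move=> [c' [a' []]] /=.
case: eqP => // cardQ; case scaleQ: (scale t p Q) => [x|] //.
case eval_g: (eval (g x)) => [[c'' a'']|] //= [<- <-] [le_c'' Ra] spec_f.
have [c3 [b [eval_gf [le_c3 Rb]]]] : spec (bind (g x) f) (c'' + c2) R2.
  by apply: IH spec_f; exists c'', a''.
by exists c3.+1, b; rewrite /= cardQ eqxx scaleQ eval_gf; split=> //; split=> //; lia.
Qed.

Lemma spec_map A B (P : prog n A) c (v : A) (g : A -> B) :
  spec P c (eq^~ v) -> spec (bind P (fun r => Ret (g r))) c (eq^~ (g v)).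
Proof. by move=> H; rewrite -[c]addn0; apply: spec_bind H _ => a ->; exact: spec_ret. Qed.

Lemma spec_ask A (Q : {set 'I_n}) (g : 'I_n -> prog n A) c R :
  #|Q| = k -> (exists x, scale t p Q = Some x) ->
  (forall x, scale t p Q = Some x -> spec (g x) c R) -> spec (Ask Q g) c.+1 R.
Proof.
move=> cardQ [x scaleQ] spec_g; have [c' [a [eval_g [le_c' Ra]]]] := spec_g x scaleQ.
by exists c'.+1, a; rewrite /= cardQ eqxx scaleQ eval_g.
Qed.

Lemma spec_foldm S T (f : S -> T -> prog n S) (I : seq T -> S -> Prop) c :
  (forall x l s, I (x :: l) s -> spec (f s x) c (I l)) ->
  forall l s, I l s -> spec (foldm f l s) (c * size l) (I [::]).
Proof.
move=> spec_f; elim=> [|x l IH] s Is /=; first exact: spec_ret.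
by rewrite mulnS; apply: spec_bind (spec_f _ _ _ Is) _ => s' Is'; exact: IH.
Qed.

End Evaluation.

Lemma card_ord_lt n m : #|[set i : 'I_n | i < m]| = minn m n.
Proof.
rewrite cardsE cardE /enum_mem size_filter -enumT -(count_map val (fun i => i < m)).
rewrite val_enum_ord; elim: n => [|n IH]; first by rewrite minn0.
by rewrite -addn1 iotaD count_cat IH /= add0n; lia.
Qed.

Lemma card_ord_ge n m : #|[set i : 'I_n | m <= i]| = n - m.
Proof.
have := cardsC [set i : 'I_n | i < m]; rewrite card_ord card_ord_lt.
have -> : ~: [set i : 'I_n | i < m] = [set i : 'I_n | m <= i].
  by apply/setP=> i; rewrite !inE -leqNgt.
lia.
Qed.

Lemma card_perm_preim n (p : {perm 'I_n}) (P : pred nat) :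
  #|[set x | P (p x)]| = #|[set i : 'I_n | P i]|.
Proof.
rewrite -[RHS](card_preimset _ (@perm_inj _ p)); apply: eq_card => x.
by rewrite !inE.
Qed.

Section Rank.
Variables (n : nat) (p : {perm 'I_n}).
Implicit Types Q : {set 'I_n}.

Definition rank Q x := #|[set y in Q | p y < p x]|.

Lemma eq_perm_val (x y : 'I_n) : (x == y) = (nat_of_ord (p x) == p y).
Proof. by rewrite val_eqE (inj_eq (@perm_inj _ p)). Qed.

Lemma rank_lt Q x y : p x < p y -> x \in Q -> rank Q x < rank Q y.
Proof.
move=> lt_xy xQ; apply: proper_card; apply/properP; split.
  by apply/subsetP=> z; rewrite !inE => /andP[-> /ltn_trans->].
by exists x; rewrite !inE ?ltnn ?andbF // xQ lt_xy.
Qed.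

Lemma rank_inj Q : {in Q &, injective (rank Q)}.
Proof.
move=> x y xQ yQ eq_r; case: (ltngtP (p x) (p y)) => [lt|lt|/val_inj/perm_inj //].
- by have := rank_lt lt xQ; rewrite eq_r ltnn.
- by have := rank_lt lt yQ; rewrite eq_r ltnn.
Qed.

Lemma rank_lt_card Q x : x \in Q -> rank Q x < #|Q|.
Proof.
move=> xQ; apply: proper_card; apply/properP; split.
  by apply/subsetP=> z; rewrite inE => /andP[].
by exists x => //; rewrite inE ltnn andbF.
Qed.

Lemma rank_onto Q i : i < #|Q| -> exists2 x, x \in Q & rank Q x = i.
Proof.
have uniq_ranks : uniq (map (rank Q) (enum Q)).
  by rewrite map_inj_in_uniq ?enum_uniq // => x y; rewrite !mem_enum; apply: rank_inj.
have sub_ranks : {subset map (rank Q) (enum Q) <= iota 0 #|Q|}.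
  by move=> r /mapP[x]; rewrite mem_enum => /rank_lt_card ? ->; rewrite mem_iota.
have [|_ same_ranks] := uniq_min_size uniq_ranks sub_ranks.
  by rewrite size_map size_iota cardE.
move=> lt_iQ; have : i \in iota 0 #|Q| by rewrite mem_iota.
rewrite -same_ranks => /mapP[x].
by rewrite mem_enum => xQ ->; exists x.
Qed.

Lemma rank_le_perm Q x : rank Q x <= p x.
Proof.
apply: (@leq_trans #|[set y | p y < p x]|).
  by apply: subset_leq_card; apply/subsetP=> z; rewrite !inE => /andP[].
by rewrite (card_perm_preim p (fun i => i < p x)) card_ord_lt geq_minl.
Qed.

Lemma rank_add_above Q x :
  x \in Q -> rank Q x + #|[set y in Q | p x < p y]| = #|Q|.-1.
Proof.
move=> xQ; rewrite (cardsD1 x Q) xQ -(cardsID [set y | p y < p x] (Q :\ x)).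
congr (_ + _); apply: eq_card => z; rewrite !inE eq_perm_val;
  by case: ltngtP; rewrite ?andbT ?andbF.
Qed.

Lemma card_above_le Q x : #|[set y in Q | p x < p y]| <= n - (p x).+1.
Proof.
apply: (@leq_trans #|[set y | (p x).+1 <= p y]|).
  by apply: subset_leq_card; apply/subsetP=> z; rewrite !inE => /andP[].
by rewrite (card_perm_preim p (fun i => (p x).+1 <= i)) card_ord_ge.
Qed.

Lemma scaleP t Q x : scale t p Q = Some x <-> x \in Q /\ rank Q x = t.-1.
Proof.
rewrite /scale; case: pickP => [y /andP[yQ /eqP ry]|none]; split.
- by move=> [<-].
- by move=> [xQ rx]; congr Some; apply: (@rank_inj Q) => //; rewrite rx -ry.
- by [].
- by move=> [xQ rx]; have := none x; rewrite xQ /= -/(rank Q x) rx eqxx.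
Qed.

Lemma scale_exists k t Q : 0 < t -> t <= k -> #|Q| = k -> exists x, scale t p Q = Some x.
Proof.
move=> t_gt0 le_tk cardQ; have [|x xQ rx] := @rank_onto Q t.-1; first lia.
by exists x; apply/scaleP.
Qed.

End Rank.

Definition probe n (C : {set 'I_n}) (e x y : 'I_n) := (C :\ e) :|: [set x; y].

Section Extremes.
Variables (k t n : nat) (p : {perm 'I_n}).
Hypotheses (t_gt0 : 0 < t) (le_tk : t <= k) (le_kn : k <= n).
Implicit Types Q : {set 'I_n}.
Local Notation S := (smallS t p).
Local Notation L := (largeL k t p).
Local Notation E := (smallS t p :|: largeL k t p).

Lemma card_smallS : #|S| = t.-1.
Proof. by rewrite (card_perm_preim p (fun i => i < t.-1)) card_ord_lt; lia. Qed.

Lemma card_largeL : #|L| = k - t.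
Proof. by rewrite (card_perm_preim p (fun i => n - (k - t) <= i)) card_ord_ge; lia. Qed.

Lemma card_extremes : #|E| = k.-1.
Proof.
rewrite cardsU card_smallS card_largeL.
have -> : S :&: L = set0 by apply/setP=> x; rewrite !inE; lia.
by rewrite cards0; lia.
Qed.

Lemma scale_notin_extremes Q x : #|Q| = k -> scale t p Q = Some x -> x \notin E.
Proof.
move=> cardQ /scaleP[xQ rank_x]; rewrite !inE negb_or -leqNgt -ltnNge.
have := rank_add_above p xQ; have := card_above_le p Q x; have := rank_le_perm p Q x.
by have := ltn_ord (p x); rewrite rank_x cardQ; lia.
Qed.

Lemma extreme_lt_midE x z : x \notin E -> z \in E -> (p z < p x) = (z \in S).
Proof. by rewrite !inE; lia. Qed.

Lemma card_probe e x y :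
  e \in E -> x \notin E -> y \notin E -> x != y -> #|probe E e x y| = k.
Proof.
move=> eE xE yE neq_xy; have := cardsD1 e E; rewrite eE card_extremes add1n.
rewrite /probe cardsU cards2 neq_xy.
have -> : (E :\ e) :&: [set x; y] = set0.
  apply/setP=> z; rewrite in_set0 in_setI in_setD1 in_set2.
  apply/negP=> /andP[/andP[_ zE] /orP[] /eqP eq_z].
    by rewrite eq_z (negbTE xE) in zE.
  by rewrite eq_z (negbTE yE) in zE.
by rewrite cards0 /=; move: #|E :\ e|; lia.
Qed.

Lemma below_probe_mid e x y : x \notin E -> y \notin E -> p x < p y ->
  [set z in probe E e x y | p z < p x] = S :\ e.
Proof.
move=> xE yE lt_xy; apply/setP=> z.
rewrite in_setD1 inE /probe in_setU in_setD1 in_set2.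
have [zE | zNE] := boolP (z \in E).
  have [zx zy] : z != x /\ z != y.
    by split; apply/eqP=> eq_z; [move: xE | move: yE]; rewrite -eq_z zE.
  by rewrite (negbTE zx) (negbTE zy) (extreme_lt_midE xE zE) !orbF andbT.
have -> : z \in S = false by apply: contraNF zNE => zS; rewrite in_setU zS.
rewrite andbF /=; case: eqP => [->|_]; first by rewrite ltnn.
by case: eqP => [->|//]; rewrite ltnNge ltnW.
Qed.

Lemma scale_probe e x y : e \in E -> x \notin E -> y \notin E -> x != y ->
  scale t p (probe E e x y) = Some (if (e \in L) == (p x < p y) then x else y).
Proof.
move=> eE; wlog lt_xy : x y / p x < p y => [wlog_lt xE yE neq_xy | xE yE neq_xy].
  case: (ltngtP (p x) (p y)) => [lt_xy | lt_yx | /val_inj/perm_inj eq_xy].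
  - by rewrite wlog_lt // lt_xy.
  - rewrite /probe (setUC [set x]) wlog_lt 1?eq_sym // lt_yx.
    by case: (e \in L).
  - by move: neq_xy; rewrite eq_xy eqxx.
have card_Q := card_probe eE xE yE neq_xy.
have rank_x : rank p (probe E e x y) x = t.-1 - (e \in S).
  by rewrite /rank below_probe_mid // -card_smallS (cardsD1 e S) addKn.
rewrite lt_xy eqb_id; case eL: (e \in L).
  apply/scaleP; split; first by rewrite !inE eqxx orbT.
  rewrite rank_x (_ : e \in S = false) ?subn0 //.
  by apply/negbTE; move: eL; rewrite !inE -leqNgt; lia.
have eS : e \in S by move: eE; rewrite in_setU eL orbF.
have [r scale_r] := scale_exists p t_gt0 le_tk card_Q.
have [+ rank_r] := (scaleP _ _ _ _).1 scale_r.
rewrite /probe in_setU in_setD1 (negbTE (scale_notin_extremes card_Q scale_r)) andbF /=.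
case/set2P=> [eq_rx|eq_ry]; last by rewrite scale_r eq_ry.
move: rank_r; rewrite eq_rx rank_x eS.
by have := card_smallS; have := cardsD1 e S; rewrite eS; lia.
Qed.

End Extremes.

Fixpoint merge_prog n (cmp : 'I_n -> 'I_n -> prog n bool) (fuel : nat)
    (s1 s2 : seq 'I_n) : prog n (seq 'I_n) :=
  if fuel is fuel'.+1 then
    match s1, s2 with
    | [::], _ => Ret s2
    | _, [::] => Ret s1
    | x :: s1', y :: s2' =>
      bind (cmp x y) (fun b => if b
        then bind (merge_prog cmp fuel' s1' s2) (fun r => Ret (x :: r))
        else bind (merge_prog cmp fuel' s1 s2') (fun r => Ret (y :: r)))
    end
  else Ret (s1 ++ s2).

Fixpoint sort_prog n (cmp : 'I_n -> 'I_n -> prog n bool) (depth : nat)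
    (s : seq 'I_n) : prog n (seq 'I_n) :=
  if depth is depth'.+1 then
    if size s <= 1 then Ret s else
    bind (sort_prog cmp depth' (take (size s)./2 s)) (fun s1 =>
    bind (sort_prog cmp depth' (drop (size s)./2 s)) (fun s2 =>
    merge_prog cmp (size s) s1 s2))
  else Ret s.

Section Sorting.
Variables (k t n : nat) (p : {perm 'I_n}) (le : rel 'I_n) (ok : pred 'I_n).
Variable cmp : 'I_n -> 'I_n -> prog n bool.
Hypothesis cmpP : forall x y, ok x -> ok y -> x != y ->
  spec k t p (cmp x y) 1 (eq^~ (le x y)).
Hypothesis le_total : total le.

Lemma merge_progP fuel s1 s2 : size s1 + size s2 <= fuel ->
  uniq (s1 ++ s2) -> all ok (s1 ++ s2) ->
  spec k t p (merge_prog cmp fuel s1 s2) (size s1 + size s2) (eq^~ (merge le s1 s2)).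
Proof.
elim: fuel s1 s2 => [|fuel IH] [|x s1] [|y s2] //= size_le uniq_s ok_s;
  try by apply: spec_ret; rewrite ?cats0.
have neq_xy : x != y.
  by move: uniq_s => /andP[]; rewrite mem_cat inE !negb_or => /and3P[_ -> _].
move: ok_s => /andP[ok_x]; rewrite all_cat /= => /and3P[ok_s1 ok_y ok_s2].
apply: (spec_weaken (c1 := 1 + (size s1 + size (y :: s2)))
  (R1 := eq^~ (if le x y then x :: merge le s1 (y :: s2)
               else y :: merge le (x :: s1) s2))); last 2 first.
- by rewrite /=; lia.
- by move=> r ->.
apply: spec_bind (cmpP ok_x ok_y neq_xy) _ => _ ->.
case: (le x y); apply: spec_map.
  by apply: IH => //=; [lia | rewrite all_cat /= ok_s1 ok_y ok_s2].
apply: spec_weaken (IH (x :: s1) s2 _ _ _) _ _ => //=.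
- by lia.
- have sub : subseq ((x :: s1) ++ s2) ((x :: s1) ++ y :: s2).
    by rewrite cat_subseq ?subseq_cons.
  exact: subseq_uniq sub uniq_s.
- by rewrite ok_x all_cat ok_s1 ok_s2.
- by lia.
Qed.

Lemma sort_progP depth s : uniq s -> all ok s ->
  spec k t p (sort_prog cmp depth s) (depth * size s)
    (fun r => perm_eq r s /\ (size s <= 2 ^ depth -> sorted le r)).
Proof.
have sorted_small (r : seq 'I_n) : size r <= 1 -> sorted le r by case: r => [|? []].
elim: depth s => [|depth IH] s uniq_s ok_s /=.
  by apply: spec_ret; split=> // size_s; exact: sorted_small.
case: ifP => [/sorted_small sorted_s | size_s]; first exact: spec_ret.
set h := (size s)./2.
have [uniq1 uniq2] : uniq (take h s) /\ uniq (drop h s).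
  by move: uniq_s; rewrite -{1}(cat_take_drop h s) cat_uniq => /and3P[-> _ ->].
have [ok1 ok2] : all ok (take h s) /\ all ok (drop h s).
  by apply/andP; rewrite -all_cat cat_take_drop.
have size12 : size (take h s) + size (drop h s) = size s by rewrite -size_cat cat_take_drop.
have -> : depth.+1 * size s = depth * size (take h s) + (depth * size (drop h s) + size s).
  by rewrite mulSn -size12; lia.
apply: spec_bind (IH _ uniq1 ok1) _ => s1 [perm1 sorted1].
apply: spec_bind (IH _ uniq2 ok2) _ => s2 [perm2 sorted2].
have perm12 : perm_eq (s1 ++ s2) s.
  by rewrite -[X in perm_eq _ X](cat_take_drop h); apply: perm_cat.
apply: spec_weaken (merge_progP (fuel := size s) _ _ _) _ _.
- by rewrite -size_cat (perm_size perm12).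
- by rewrite (perm_uniq perm12).
- by rewrite (perm_all _ perm12).
- by rewrite -size_cat (perm_size perm12).
move=> r ->; split; first by rewrite (perm_trans _ perm12) // perm_merge.
rewrite expnS; move: (2 ^ depth) sorted1 sorted2 => m sorted1 sorted2 size_le.
apply: merge_sorted => //.
- by apply: sorted1; rewrite size_take /h; case: ifP; move: (size s) size_le; lia.
- by apply: sorted2; rewrite size_drop /h; move: (size s) size_le; lia.
Qed.

End Sorting.

Definition sift n (C : {set 'I_n}) (z : 'I_n) : prog n {set 'I_n} :=
  Ask (z |: C) (fun r => Ret ((z |: C) :\ r)).

Definition extremes_prog n m : prog n {set 'I_n} :=
  foldm (@sift n) [seq i : 'I_n <- enum 'I_n | m <= i] [set i : 'I_n | i < m].

Definition compare n (C : {set 'I_n}) (e x y : 'I_n) : prog n bool :=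
  Ask (probe C e x y) (fun r => Ret (r == x)).

Definition classify n (C : {set 'I_n}) (x0 y0 : 'I_n) : prog n {set 'I_n} :=
  foldm (fun A e => bind (compare C e x0 y0) (fun b => Ret (if b then e |: A else A)))
    (enum C) set0.

(* With C = S ∪ L and A one of S, L: as #|S| = t-1 and #|L| = k-t, this is L
   unless the two sizes coincide. *)
Definition guess_large n k t (C A : {set 'I_n}) : {set 'I_n} :=
  if #|A| == k - t then A else C :\: A.

(* [compare C e0] sorts the middle increasingly iff e0 ∈ L, hence the final
   reversal when e0 seems to lie in S. *)
Definition algorithm k t n (i0 : 'I_n) : prog n ({set 'I_n} * seq 'I_n) :=
  bind (extremes_prog n k.-1) (fun C =>
  let mid := enum (~: C) in
  let e0 := odflt i0 [pick e in C] in
  bind (classify C (nth i0 mid 0) (nth i0 mid 1)) (fun A =>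
  bind (sort_prog (compare C e0) (trunc_log 2 n).+1 mid) (fun s =>
  Ret (C, if e0 \in guess_large k t C A then s else rev s)))).

Section Algorithm.
Variables (k t n : nat) (p : {perm 'I_n}).
Hypotheses (k_gt1 : 1 < k) (t_gt0 : 0 < t) (le_tk : t <= k) (lt_kn : k < n).
Local Notation S := (smallS t p).
Local Notation L := (largeL k t p).
Local Notation E := (smallS t p :|: largeL k t p).

Let le_kn : k <= n. Proof. exact: ltnW. Qed.

Lemma extremes_progP : spec k t p (extremes_prog n k.-1) n (eq^~ E).
Proof.
pose inv (s : seq 'I_n) (C : {set 'I_n}) := [/\ uniq s, {in s, forall z, z \notin C},
  #|C| = k.-1 & {subset E <= [predU C & s]}].
rewrite /extremes_prog.
apply: spec_weaken (@spec_foldm k t n p {set 'I_n} 'I_n (@sift n) inv 1 _ _ _ _) _ _.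
- move=> x s C [/andP[x_s uniq_s] s_C card_C E_sub].
  have x_C : x \notin C by apply: s_C; rewrite inE eqxx.
  have card_xC : #|x |: C| = k by rewrite cardsU1 x_C card_C; lia.
  apply: (spec_ask card_xC); first exact (scale_exists p t_gt0 le_tk card_xC).
  move=> r scale_r; apply: spec_ret.
  have [r_xC _] := (scaleP _ _ _ _).1 scale_r.
  have r_E := scale_notin_extremes t_gt0 le_tk le_kn card_xC scale_r.
  split=> //.
  + move=> z z_s; rewrite !inE negb_and negb_or (negbTE (s_C z _)) ?inE ?z_s ?orbT //.
    by rewrite andbT; apply/orP; right; apply: contraNneq x_s => <-.
  + by have := cardsD1 r (x |: C); rewrite r_xC card_xC add1n => ->.
  + move=> z z_E; have := E_sub z z_E; rewrite !inE.
    have -> : z != r by apply: contraNneq r_E => <-.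
    by case: (z =P x).
- split.
  + by rewrite filter_uniq // enum_uniq.
  + by move=> z; rewrite mem_filter inE; lia.
  + by rewrite card_ord_lt; lia.
  + by move=> z _; rewrite !inE mem_filter mem_enum andbT; lia.
- rewrite mul1n size_filter.
  by have := count_size (fun i : 'I_n => k.-1 <= i) (enum 'I_n); rewrite size_enum_ord.
- move=> C [_ _ card_C E_sub]; apply/eqP; rewrite eq_sym eqEcard card_C card_extremes //.
  by rewrite leqnn andbT; apply/subsetP=> z /E_sub; rewrite !inE orbF.
Qed.

Definition oriented_le (b : bool) : rel 'I_n :=
  fun x y => if b then p x <= p y else p y <= p x.

Lemma oriented_le_total b : total (oriented_le b).
Proof. by move=> x y; rewrite /oriented_le; case: b; apply: leq_total. Qed.

Lemma sorted_midE b s : perm_eq s (enum (~: E)) -> sorted (oriented_le b) s ->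
  s = if b then mid_sorted k t p else rev (mid_sorted k t p).
Proof.
pose le x y := p x <= p y.
have le_trans : transitive le by move=> ? ? ?; apply: leq_trans.
have le_anti : antisymmetric le.
  by move=> x y /anti_leq /val_inj /perm_inj.
have le_total : total le by move=> ? ?; apply: leq_total.
have sorted_mid : sorted le (mid_sorted k t p) by apply: sort_sorted.
have perm_mid : perm_eq (mid_sorted k t p) (enum (~: E)) by rewrite perm_sort.
case: b => perm_s sorted_s.
  by apply: (sorted_eq le_trans le_anti) => //; rewrite (perm_trans perm_s) // perm_sym.
rewrite -[s]revK; congr rev; apply: (sorted_eq le_trans le_anti) => //.
  by rewrite rev_sorted.
by rewrite perm_rev (perm_trans perm_s) // perm_sym.
Qed.

Lemma compareP e x y : e \in E -> x \notin E -> y \notin E -> x != y ->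
  spec k t p (compare E e x y) 1 (eq^~ ((e \in L) == (p x < p y))).
Proof.
move=> eE xE yE neq_xy; have scale_xy := scale_probe t_gt0 le_tk le_kn eE xE yE neq_xy.
apply: spec_ask; first exact: card_probe.
  by eexists; exact: scale_xy.
move=> r; rewrite scale_xy => -[<-]; apply: spec_ret.
by case: ifP; rewrite ?eqxx // => _; apply/negbTE; rewrite eq_sym.
Qed.

Lemma extremes_by_side b : [set e in E | (e \in L) == b] = if b then L else S.
Proof. by apply/setP=> e; case: b; rewrite !inE; lia. Qed.

Lemma classifyP x0 y0 : x0 \notin E -> y0 \notin E -> x0 != y0 ->
  spec k t p (classify E x0 y0) k.-1 (eq^~ (if p x0 < p y0 then L else S)).
Proof.
move=> x0E y0E neq_xy0; pose side e := (e \in L) == (p x0 < p y0).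
pose inv (s : seq 'I_n) (A : {set 'I_n}) :=
  [/\ uniq s, {subset s <= E} & A = [set e in E | (e \notin s) && side e]].
rewrite /classify.
apply: spec_weaken (@spec_foldm k t n p {set 'I_n} 'I_n _ inv 1 _ _ _ _) _ _.
- move=> e s A [/andP[e_s uniq_s] s_E ->]; have eE : e \in E by apply: s_E; rewrite inE eqxx.
  rewrite -[1]addn0; apply: spec_bind (compareP eE x0E y0E neq_xy0) _ => _ ->.
  apply: spec_ret; split=> //; first by move=> z z_s; apply: s_E; rewrite inE z_s orbT.
  apply/setP=> z; rewrite -/(side e).
  case side_e: (side e); rewrite ?in_setU1 !in_set in_cons negb_or;
    case: (z =P e) => [->|_] //=; rewrite e_s side_e ?andbF ?andbT //.
  by move: eE; rewrite !inE => ->.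
- split; [exact: enum_uniq | by move=> z; rewrite mem_enum |].
  by apply/setP=> z; rewrite in_set0 in_set mem_enum andbA andbN.
- by rewrite mul1n -cardE card_extremes.
- by move=> A [_ _ ->]; rewrite -extremes_by_side; apply/setP=> z; rewrite !inE.
Qed.

Lemma guess_largeP b (G := guess_large k t E (if b then L else S)) :
  G = L \/ (k.+1 = t.*2 /\ G = S).
Proof.
rewrite {}/G /guess_large; case: b; first by rewrite card_largeL // eqxx; left.
rewrite (card_smallS p t_gt0 le_tk le_kn).
case: eqP => [eq_tk | _]; first by right; split=> //; lia.
by left; apply/setP=> z; rewrite !inE; lia.
Qed.

Lemma in_smallS_extremes e : e \in E -> (e \in S) = (e \notin L).
Proof. by rewrite !inE; lia. Qed.

Lemma algorithmP (i0 : 'I_n) :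
  spec k t p (algorithm k t i0) (n + (k.-1 + (trunc_log 2 n).+1 * n))
    (fun o => o.1 = E /\ (o.2 = mid_sorted k t p \/
                          (k.+1 = t.*2 /\ o.2 = rev (mid_sorted k t p)))).
Proof.
rewrite /algorithm -[_ * n]addn0; apply: spec_bind extremes_progP _ => _ ->.
set mid := enum (~: E); set e0 := odflt i0 [pick e in E].
have size_mid : size mid = n - k.-1.
  have := cardsC E; rewrite card_ord card_extremes // cardE -/mid; lia.
have mid_E z : z \in mid -> z \notin E by rewrite mem_enum inE.
have uniq_mid : uniq mid by apply: enum_uniq.
have [x0E y0E] : nth i0 mid 0 \notin E /\ nth i0 mid 1 \notin E.
  by split; apply: mid_E; apply: mem_nth; rewrite size_mid; lia.
have neq_xy0 : nth i0 mid 0 != nth i0 mid 1 by rewrite nth_uniq // size_mid; lia.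
have e0E : e0 \in E.
  rewrite /e0; case: pickP => [e //|none]; have := card_extremes p t_gt0 le_tk le_kn.
  by rewrite (eq_card0 none); lia.
apply: spec_bind (classifyP x0E y0E neq_xy0) _ => _ ->.
have cmpP x y : x \notin E -> y \notin E -> x != y ->
    spec k t p (compare E e0 x y) 1 (eq^~ (oriented_le (e0 \in L) x y)).
  move=> xE yE neq_xy; apply: spec_weaken (compareP e0E xE yE neq_xy) _ _ => // _ ->.
  have neq_pxy : nat_of_ord (p x) != p y by rewrite -eq_perm_val.
  rewrite /oriented_le eq_sym; case: (e0 \in L).
    by rewrite eqb_id ltn_neqAle neq_pxy.
  by rewrite eqbF_neg ltnNge negbK.
have ok_mid : all (fun z => z \notin E) mid by apply/allP.
have sort_mid := sort_progP cmpP (oriented_le_total _) (trunc_log 2 n).+1 uniq_mid ok_mid.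
apply: spec_bind (spec_weaken sort_mid _ (fun _ h => h)) _.
  by rewrite leq_mul2l size_mid leq_subr orbT.
move=> s [perm_s sorted_s].
have size_ok : size mid <= 2 ^ (trunc_log 2 n).+1.
  by rewrite size_mid; apply: leq_trans (leq_subr _ _) (ltnW (trunc_log_ltn _ _)).
rewrite (sorted_midE perm_s (sorted_s size_ok)).
apply: spec_ret; split=> //=.
case: (guess_largeP (p (nth i0 mid 0) < p (nth i0 mid 1))) => [-> | [sym ->]].
  by left; case: (e0 \in L); rewrite ?revK.
by right; split=> //; rewrite in_smallS_extremes //; case: (e0 \in L); rewrite /= ?revK.
Qed.

End Algorithm.

Theorem mainTheorem1 (k t : nat) (hk : 2 <= k) (ht1 : 1 <= t) (htk : t <= k) :
  exists (C N : nat), forall n : nat, N <= n ->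
    exists T : qtree n, forall p : {perm 'I_n},
      exists (q : nat) (M : {set 'I_n}) (s : seq 'I_n),
        run k t p T = Some (q, (M, s)) /\
        q <= C * n * trunc_log 2 n /\
        M = smallS t p :|: largeL k t p /\
        (s = mid_sorted k t p \/ (k.+1 = t.*2 /\ s = rev (mid_sorted k t p))).
Proof.
exists 4, k.+2 => n le_kn; have lt_kn : k < n by lia.
have i0 : 'I_n by exists 0; lia.
exists (qtree_of (algorithm k t i0)) => p.
have [q [[M s] [run_q [le_q [/= M_E s_mid]]]]] := algorithmP p hk ht1 htk lt_kn i0.
exists q, M, s; rewrite run_qtree_of run_q; do !split=> //.
have : 0 < trunc_log 2 n by rewrite trunc_log_gt0; lia.
by move: (trunc_log 2 n) le_q; nia.
Qed.
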